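(* Fix a prime $p$ and $n\in\mathbb{N}$. The assignment $(A\subseteq B)\mapsto G(A\subseteq B)$ from objects of $\mathcal{S}(\mathbb{Z}/p^n)$ to groups preserves indecomposability (if $(A\subseteq B)$ is an indecomposable object of $\mathcal{S}(\mathbb{Z}/p^n)$ then $G(A\subseteq B)$ is an indecomposable group, i.e. not a direct product of two nontrivial subgroups), and it preserves and reflects isomorphisms: $(A\subseteq B)\cong(A'\subseteq B')$ in $\mathcal{S}(\mathbb{Z}/p^n)$ if and only if $G(A\subseteq B)\cong G(A'\subseteq B')$ as groups.
   Context: $\mathcal{S}(\mathbb{Z}/p^n)$ is the category whose objects are pairs $(A\subseteq B)$ where $B$ is a finite abelian group with $p^nB=0$ and $A$ is a subgroup of $B$; a morphism $(A\subseteq B)\to(A'\subseteq B')$ is a group homomorphism $f\colon B\to B'$ with $f(A)\subseteq A'$. An object is indecomposable if it is nonzero and not isomorphic to a direct sum $(A_1\oplus A_2\subseteq B_1\oplus B_2)$ of two nonzero objects. For such an object with $A$ of exponent $p^m$ and inclusion $\iota\colon A\to B$, $G(A\subseteq B)$ is the set $A\oplus B\oplus \mathbb{Z}/p^m$ with group operation $(a,b,d)+(a',b',d')=(a+a',\,b+d\,\iota(a')+b',\,d+d')$. *)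

From HB Require Import structures.
From mathcomp Require Import all_boot all_order all_algebra all_fingroup all_solvable.
Set Implicit Arguments. Unset Strict Implicit. Unset Printing Implicit Defensive.
Import GRing.Theory.

Local Open Scope group_scope.

(* An object (A \subseteq B) of S(Z/p^n): a finite abelian group B (written
   multiplicatively, as a subgroup of an ambient finGroupType) together with
   a subgroup A of B.  The condition p^n B = 0 is [is_Sobj p n] below. *)
Record sobj (gT : finGroupType) := SObj {
  sA : {group gT};
  sB : {group gT};
  sA_sub : sA \subset sB;
  sB_abelian : abelian sB
}.

Definition is_Sobj (p n : nat) (gT : finGroupType) (X : sobj gT) : Prop :=
  exponent (sB X) %| p ^ n.

Definition Siso (gT hT : finGroupType) (A B : {set gT}) (A' B' : {set hT}) : Prop :=
  exists f : {morphism B >-> hT}, isom B B' f /\ f @* A = A'.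

Definition Sindec (p n : nat) (gT : finGroupType) (X : sobj gT) : Prop :=
  sB X :!=: 1 /\
  ~ (exists (gT1 gT2 : finGroupType) (X1 : sobj gT1) (X2 : sobj gT2),
      [/\ is_Sobj p n X1, is_Sobj p n X2, sB X1 :!=: 1, sB X2 :!=: 1 &
          Siso (sA X) (sB X) (setX (sA X1) (sA X2)) (setX (sB X1) (sB X2))]).

Definition gindec (G : finGroupType) : Prop :=
  ~ (exists H K : {group G}, [/\ H \x K = [set: G], H :!=: 1 & K :!=: 1]).

(* The group G(A \subseteq B) = A x B x Z/p^m (exponent A = p^m) with
   (a,b,d)(a',b',d') = (a a', b a'^d b', d + d'). *)
Section GConstruction.
Variables (gT : finGroupType) (X : sobj gT).

Definition gk := (exponent (sA X)).-1.
Lemma gk_eq : gk.+1 = exponent (sA X).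
Proof. by rewrite /gk prednK // exponent_gt0. Qed.

Definition gtrip := (gT * gT * 'I_gk.+1)%type.
Definition gpred (x : gtrip) : bool := (x.1.1 \in sA X) && (x.1.2 \in sB X).

Definition Gcar : Type := {x : gtrip | gpred x}.
HB.instance Definition _ := Finite.on Gcar.

Lemma sAB_mem a : a \in sA X -> a \in sB X.
Proof. by move/(subsetP (sA_sub X)). Qed.

Definition Gmul_raw (x y : gtrip) : gtrip :=
  (x.1.1 * y.1.1, x.1.2 * y.1.1 ^+ x.2 * y.1.2, (x.2 + y.2)%R).

Lemma Gmul_proof (x y : Gcar) : gpred (Gmul_raw (val x) (val y)).
Proof.
case: x => [[[a b] d] /andP [/= Ha Hb]]; case: y => [[[a' b'] d'] /andP [/= Ha' Hb']].
by rewrite /gpred /= groupM // !groupM // groupX // sAB_mem.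
Qed.
Definition Gmul (x y : Gcar) : Gcar := exist (fun z : gtrip => gpred z) _ (Gmul_proof x y).

Lemma Gone_proof : gpred (1, 1, 0%R).
Proof. by rewrite /gpred /= !group1. Qed.
Definition Gone : Gcar := exist (fun z : gtrip => gpred z) _ Gone_proof.

Definition Ginv_raw (x : gtrip) : gtrip :=
  (x.1.1^-1, (x.1.1 ^+ (- x.2)%R)^-1 * x.1.2^-1, (- x.2)%R).

Lemma Ginv_proof (x : Gcar) : gpred (Ginv_raw (val x)).
Proof.
case: x => [[[a b] d] /andP [/= Ha Hb]].
by rewrite /gpred /= groupV Ha groupM // groupV // groupX // sAB_mem.
Qed.
Definition Ginv (x : Gcar) : Gcar := exist (fun z : gtrip => gpred z) _ (Ginv_proof x).

Lemma comB (u v : gT) : u \in sB X -> v \in sB X -> commute u v.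
Proof. move=> Hu Hv; exact: (centsP (sB_abelian X)). Qed.

Lemma expA_mod (a : gT) (d d' : 'I_gk.+1) : a \in sA X ->
  a ^+ (d + d')%R = a ^+ d * a ^+ d'.
Proof.
move=> Ha; rewrite -expgD /= expg_mod // gk_eq; exact: expg_exponent.
Qed.

Lemma GmulA : associative Gmul.
Proof.
case=> [[[a b] d] Hx]; case=> [[[a' b'] d'] Hy]; case=> [[[a'' b''] d''] Hz].
have /andP [Ha' Hb'] := Hy; have /andP [Ha'' Hb''] := Hz.
apply: val_inj; rewrite /= /Gmul_raw /= mulgA addrA; congr (_, _, _).
have Ba' := sAB_mem Ha'; have Ba'' := sAB_mem Ha''.
rewrite expA_mod // expgMn; last exact: comB.
rewrite !mulgA; congr (_ * _).
rewrite -!mulgA; congr (_ * _); congr (_ * _).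
rewrite !mulgA; congr (_ * _).
by apply: comB => //; rewrite groupX.
Qed.

Lemma Gmul1 : left_id Gone Gmul.
Proof.
case=> [[[a b] d] Hx]; apply: val_inj.
by rewrite /= /Gmul_raw /= mul1g expg0 !mul1g add0r.
Qed.

Lemma GmulV : left_inverse Gone Ginv Gmul.
Proof.
case=> [[[a b] d] Hx]; have /andP [Ha Hb] := Hx; apply: val_inj.
rewrite /= /Gmul_raw /= mulVg addNr; congr (_, _, _).
have Bx : a ^+ (- d)%R \in sB X by rewrite groupX // sAB_mem.
rewrite -(mulgA _ b^-1) (comB _ Bx) ?groupV // !mulgA mulVg mul1g mulVg.
done.
Qed.

HB.instance Definition _ := Finite_isGroup.Build Gcar GmulA Gmul1 GmulV.

End GConstruction.

Definition Gof (gT : finGroupType) (X : sobj gT) : finGroupType := Gcar X.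

From HB Require Import structures.
From mathcomp Require Import all_boot all_order all_algebra all_fingroup all_solvable.

Set Implicit Arguments. Unset Strict Implicit. Unset Printing Implicit Defensive.
Import GRing.Theory.
Local Open Scope group_scope.

(* The embedding b |-> (1, b, 0) identifies B with the centre Z(G) and A with
   the commutator subgroup G' of G = G(A \subseteq B): an element (a, b, d)
   commuting with (1, 1, 1) and with every (a', 1, 0) has a = 1 and d = 0,
   and [(a, b, d), (a', b', d')] = (1, a^-d' a'^d, 0).  Hence a group
   isomorphism G(X) ~ G(Y) restricts to an isomorphism of the pairs
   (G' \subseteq Z(G)), i.e. of X and Y, while an isomorphism of pairs lifts
   componentwise to the groups.  A decomposition G = H x K gives
   Z(G) = Z(H) x Z(K) and G' = H' x K', hence a decomposition of X; its
   summands are nonzero because G is nilpotent of class at most 2, so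
   nontrivial factors have nontrivial centres. *)

Lemma Siso_sym (gT hT : finGroupType) (A B : {group gT}) (A' B' : {group hT}) :
  A \subset B -> Siso A B A' B' -> Siso A' B' A B.
Proof.
move=> sAB [f [isof fA]]; exists (isom_inv isof); split; first exact: isom_sym.
have sAB' : A' \subset B' by rewrite -fA -(isom_im isof) morphimS.
by rewrite /isom_inv restrmEsub // -fA morphim_invm.
Qed.

Lemma Siso_trans (gT hT kT : finGroupType) (A B : {group gT}) (A' B' : {group hT})
    (A'' B'' : {group kT}) :
  A \subset B -> Siso A B A' B' -> Siso A' B' A'' B'' -> Siso A B A'' B''.
Proof.
move=> sAB [f [isof fA]] [g [isog gA]].
have sBd : B \subset 'dom (g \o f).
  by rewrite /dom /= -(isom_im isof) morphimGK ?subsetIl // (isom_inj isof).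
exists (restrm sBd (g \o f)); split; last first.
  by rewrite restrmEsub ?(subset_trans sAB) // morphim_comp fA gA.
apply/isomP; split.
  by rewrite injm_restrm // injm_comp ?(isom_inj isof) ?(isom_inj isog).
by rewrite restrmEsub // morphim_comp (isom_im isof) (isom_im isog).
Qed.

Lemma Siso_dprod (gT : finGroupType) (H K H1 K1 G G1 : {group gT}) :
  H \x K = G -> H1 \x K1 = G1 -> H1 \subset H -> K1 \subset K ->
  Siso (setX H1 K1) (setX H K) G1 G.
Proof.
move=> /mulgmP/misomP[mulM isoG] /dprodP[_ defG1 _ _] sH1 sK1.
exists (morphm_morphism mulM); split => //.
by rewrite morphimEsub ?setXS //= imset_mulgm.
Qed.

Section GStructure.
Variables (gT : finGroupType) (X : sobj gT).
Local Notation G := (Gof X).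

Lemma val_Gmul (x y : G) : val (x * y) = Gmul_raw (val x) (val y).
Proof. by []. Qed.

Definition Gelt (a b : gT) (d : 'I_(gk X).+1) : G := insubd (1 : G) (a, b, d).

Lemma val_Gelt a b d : a \in sA X -> b \in sB X -> val (Gelt a b d) = (a, b, d).
Proof. by move=> Aa Bb; rewrite /Gelt insubdK // unfold_in /gpred /= Aa Bb. Qed.

Lemma expg_inZp1 a : a \in sA X -> a ^+ (inZp 1 : 'I_(gk X).+1) = a.
Proof. by move=> Aa; rewrite /= expg_mod ?expg1 // gk_eq expg_exponent. Qed.

Definition Gbase (b : gT) : G := Gelt 1 b 0%R.

Lemma val_Gbase b : b \in sB X -> val (Gbase b) = (1, b, 0%R).
Proof. exact/val_Gelt/group1. Qed.

Lemma Gbase_morphM : {in sB X &, {morph Gbase : b b' / b * b'}}.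
Proof.
move=> b b' Bb Bb'; apply: val_inj.
by rewrite val_Gmul !val_Gbase ?groupM // /Gmul_raw /= mul1g expg0 mulg1 addr0.
Qed.
Canonical Gbase_morphism := Morphism Gbase_morphM.

Lemma injm_Gbase : 'injm Gbase.
Proof. by apply/injmP=> b b' Bb Bb' /(congr1 val); rewrite !val_Gbase // => -[]. Qed.

Lemma Gbase_sub_center : Gbase @* sB X \subset 'Z([set: G]).
Proof.
apply/subsetP=> _ /morphimP[b Bb _ ->]; apply/centerP; split; first by rewrite inE.
move=> [[[a' b'] d'] Hy] _; have /andP[/= Aa' Bb'] := Hy; apply: val_inj.
rewrite !val_Gmul val_Gbase // /Gmul_raw /= expg1n mul1g !mulg1 add0r addr0.
by rewrite (comB Bb Bb').
Qed.

(* Commuting with (1, 1, 1) forces a = 1; commuting with every (a', 1, 0)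
   forces exponent A to divide d. *)
Lemma center_val x : x \in 'Z([set: G]) -> val x = (1, (val x).1.2, 0%R).
Proof.
case/centerP=> _ cx; case: x cx => [[[a b] d] Hx] cx /=; have /andP[/= Aa Bb] := Hx.
have a1 : a = 1.
  have /(congr1 val) := cx (Gelt 1 1 (inZp 1)) (in_setT _).
  rewrite !val_Gmul val_Gelt //= /Gmul_raw /= expg_inZp1 // expg1n !mulg1 mul1g.
  by case=> /(congr1 (mulg^~ b^-1)); rewrite mulgK mulgV.
have ed : exponent (sA X) %| d.
  apply/exponentP=> a' Aa'.
  have /(congr1 val) := cx (Gelt a' 1 0%R) (in_setT _).
  rewrite !val_Gmul val_Gelt //= /Gmul_raw /= a1 !mulg1 mul1g.
  by case=> /(congr1 (mulg b^-1)); rewrite mul1g mulKg mulVg => ->.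
congr (_, _, _) => //; apply: val_inj => /=; apply/eqP.
apply: contraLR (ltn_ord d); rewrite -lt0n -leqNgt => d_gt0.
by apply: leq_trans (dvdn_leq d_gt0 ed); rewrite gk_eq.
Qed.

Lemma Gbase_center : Gbase @* sB X = 'Z([set: G]).
Proof.
apply/eqP; rewrite eqEsubset Gbase_sub_center; apply/subsetP=> x Zx.
have [/andP[_ Bb] ex] := (valP x, center_val Zx).
by apply/morphimP; exists (val x).1.2 => //; apply: val_inj; rewrite val_Gbase.
Qed.

Lemma Gcommg (x y : G) :
  [~ x, y] = Gbase (((val x).1.1 ^+ (val y).2)^-1 * (val y).1.1 ^+ (val x).2).
Proof.
apply: (mulgI (y * x)); rewrite -commgC.
case: x => [[[a b] d] Hx]; have /andP[/= Aa Bb] := Hx.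
case: y => [[[a' b'] d'] Hy]; have /andP[/= Aa' Bb'] := Hy.
have [Ba Ba'] := (sAB_mem Aa, sAB_mem Aa').
have Bad' : a ^+ d' \in sB X by rewrite groupX.
have Ba'd : a' ^+ d \in sB X by rewrite groupX.
apply: val_inj.
rewrite !val_Gmul val_Gbase ?groupM ?groupV // /Gmul_raw /= expg1n mulg1 addr0.
congr (_, _, _); [exact: comB Ba Ba' | | by rewrite addrC].
rewrite mulg1 !mulgA [b' * _](comB Bb' Bad') -[_ * b' * b]mulgA -[_ * (b' * b) * _]mulgA.
rewrite (comB (groupM Bb' Bb) (groupVr Bad')) mulKVg (comB Bb' Bb) -!mulgA.
by rewrite (comB Bb' Ba'd).
Qed.

Lemma Gbase_der : Gbase @* sA X = [~: [set: G], [set: G]].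
Proof.
apply/eqP; rewrite eqEsubset; apply/andP; split.
  apply/subsetP=> _ /morphimP[a _ Aa ->] /=.
  have <- : [~ Gelt 1 1 (inZp 1), Gelt a 1 0%R] = Gbase a.
    by rewrite Gcommg !val_Gelt ?sAB_mem //= expg_inZp1 // expg0 invg1 mul1g.
  by rewrite mem_commg ?inE.
rewrite gen_subG; apply/subsetP=> _ /imset2P[x y _ _ ->]; rewrite Gcommg.
have [/andP[Ax _] /andP[Ay _]] := (valP x, valP y).
have Ac : ((val x).1.1 ^+ (val y).2)^-1 * (val y).1.1 ^+ (val x).2 \in sA X.
  by rewrite groupM ?groupV ?groupX.
by rewrite mem_morphim ?sAB_mem.
Qed.

Lemma Gder_sub_center : [~: [set: G], [set: G]] \subset 'Z([set: G]).
Proof. by rewrite -Gbase_der -Gbase_center morphimS ?sA_sub. Qed.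

Lemma Siso_der_center : Siso (sA X) (sB X) [~: [set: G], [set: G]] 'Z([set: G]).
Proof.
exists Gbase_morphism; split; last exact: Gbase_der.
by apply/isomP; split; [exact: injm_Gbase | exact: Gbase_center].
Qed.

Lemma nilpotent_Gof : nilpotent [set: G].
Proof.
apply/ucnP; exists 2; apply/eqP; rewrite eqEsubset ucn_sub; apply/subsetP=> x _.
by rewrite ucnSnR ucn1 !inE (subset_trans _ Gder_sub_center) // commgSS ?subsetT.
Qed.

Lemma der1_sub_center (H : {group G}) : H^`(1) \subset 'Z(H).
Proof.
have sH'Z : H^`(1) \subset 'Z([set: G]).
  by rewrite (subset_trans _ Gder_sub_center) // commgSS ?subsetT.
rewrite subsetI der_sub (subset_trans sH'Z) //.
by rewrite (subset_trans (subsetIr _ _)) ?centS ?subsetT.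
Qed.
End GStructure.

Section Lift.
Variables (gT hT : finGroupType) (X : sobj gT) (Y : sobj hT).
Variable f : {morphism sB X >-> hT}.
Hypotheses (isof : isom (sB X) (sB Y) f) (fA : f @* sA X = sA Y).

Lemma gk_Siso : gk X = gk Y.
Proof. by rewrite /gk -fA exponent_injm ?sA_sub ?(isom_inj isof). Qed.

Lemma Siso_memA a : a \in sA X -> f a \in sA Y.
Proof. by move=> Aa; rewrite -fA mem_morphim ?sAB_mem. Qed.

Lemma Siso_memB b : b \in sB X -> f b \in sB Y.
Proof. by move=> Bb; rewrite -(isom_im isof) mem_morphim. Qed.

Definition Glift (x : Gof X) : Gof Y :=
  @Gelt _ Y (f (val x).1.1) (f (val x).1.2) (cast_ord (congr1 S gk_Siso) (val x).2).

Lemma val_Glift x :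
  val (Glift x) = (f (val x).1.1, f (val x).1.2, cast_ord (congr1 S gk_Siso) (val x).2).
Proof. by have /andP[Ax Bx] := valP x; rewrite val_Gelt ?Siso_memA ?Siso_memB. Qed.

Lemma Glift_morphM : {in [set: Gof X] &, {morph Glift : x y / x * y}}.
Proof.
move=> x y _ _; apply: val_inj; rewrite val_Gmul !val_Glift val_Gmul /Gmul_raw /=.
have [/andP[Ax Bx] /andP[Ay By]] := (valP x, valP y).
have [Bxa Bya] := (sAB_mem Ax, sAB_mem Ay).
rewrite !morphM ?groupM ?groupX // morphX //; congr (_, _, _); apply: val_inj => /=.
exact: (congr1 (fun k => _ %% k.+1) gk_Siso).
Qed.
Canonical Glift_morphism := Morphism Glift_morphM.

Lemma injm_Glift : 'injm Glift.
Proof.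
have /injmP injf := isom_inj isof.
apply/injmP=> x y _ _ /(congr1 val); rewrite !val_Glift.
case: x => [[[a b] d] Hx]; case: y => [[[a' b'] d'] Hy] /=.
have [/andP[/= Aa Bb] /andP[/= Aa' Bb']] := (Hx, Hy).
move/eqP; rewrite !xpair_eqE => /andP[/andP[/eqP ea /eqP eb] /eqP/cast_ord_inj ed].
apply: val_inj => /=.
by rewrite (injf _ _ (sAB_mem Aa) (sAB_mem Aa') ea) (injf _ _ Bb Bb' eb) ed.
Qed.

End Lift.

Lemma Siso_card_Gof (gT hT : finGroupType) (X : sobj gT) (Y : sobj hT) :
  Siso (sA X) (sB X) (sA Y) (sB Y) -> #|[set: Gof X]| <= #|[set: Gof Y]|.
Proof.
case=> f [isof fA]; rewrite -(card_injm (injm_Glift isof fA)) ?subsetT //.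
exact/subset_leq_card/subsetT.
Qed.

Lemma Siso_isog (gT hT : finGroupType) (X : sobj gT) (Y : sobj hT) :
  Siso (sA X) (sB X) (sA Y) (sB Y) -> [set: Gof X] \isog [set: Gof Y].
Proof.
(* Glift is onto: the inverse isomorphism of pairs bounds the cardinalities back. *)
move=> XY; have YX := Siso_sym (sA_sub X) XY.
case: XY => f [isof fA]; apply/isogP; exists (Glift_morphism isof fA).
  exact: injm_Glift.
apply/eqP; rewrite eqEcard subsetT card_injm ?subsetT ?injm_Glift //.
exact: Siso_card_Gof.
Qed.

Lemma isog_Siso (gT hT : finGroupType) (X : sobj gT) (Y : sobj hT) :
  [set: Gof X] \isog [set: Gof Y] -> Siso (sA X) (sB X) (sA Y) (sB Y).
Proof.
case/isogP=> psi injpsi impsi.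
apply: Siso_trans (sA_sub X) (Siso_der_center X) _.
apply: Siso_trans (Gder_sub_center X) _ (Siso_sym (sA_sub Y) (Siso_der_center Y)).
exists (restrm (subsetT 'Z([set: Gof X])) psi); split.
  apply/isomP; split; first by rewrite injm_restrm.
  by rewrite restrmEsub // injm_center ?subsetT // impsi.
by rewrite restrmEsub ?Gder_sub_center // morphimR ?subsetT // impsi.
Qed.

Lemma Gof_indec (p n : nat) (gT : finGroupType) (X : sobj gT) :
  is_Sobj p n X -> Sindec p n X -> gindec (Gof X).
Proof.
move=> SX [_ nodec] [H [K [dHK ntH ntK]]]; apply: nodec.
pose XH := SObj (der1_sub_center H) (center_abelian H).
pose XK := SObj (der1_sub_center K) (center_abelian K).
have dZ := center_dprod dHK.
have dD := der_dprod 1 dHK; rewrite derg1 in dD.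
have SZ (L : {group Gof X}) : 'Z(L) \subset 'Z([set: Gof X]) ->
    is_Sobj p n (SObj (der1_sub_center L) (center_abelian L)).
  move=> sZ; apply: dvdn_trans (exponentS sZ) _.
  by rewrite -Gbase_center exponent_injm ?injm_Gbase.
have ntZ (L : {group Gof X}) : L :!=: 1 -> 'Z(L) :!=: 1.
  by rewrite center_nil_eq1 // (nilpotentS (subsetT L) (nilpotent_Gof X)).
exists (Gof X), (Gof X), XH, XK; split => /=.
- by apply: SZ; rewrite -(dprodW dZ) mulG_subl.
- by apply: SZ; rewrite -(dprodW dZ) mulG_subr.
- exact: ntZ.
- exact: ntZ.
apply: Siso_trans (sA_sub X) (Siso_der_center X) _.
apply: Siso_sym; first by rewrite setXS ?der1_sub_center.
by apply: Siso_dprod; [exact: dZ | exact: dD | exact: der1_sub_center..].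
Qed.

Theorem lemma1 (p n : nat) (hp : prime p) :
  (forall (gT : finGroupType) (X : sobj gT),
      is_Sobj p n X -> Sindec p n X -> gindec (Gof X)) /\
  (forall (gT hT : finGroupType) (X : sobj gT) (Y : sobj hT),
      is_Sobj p n X -> is_Sobj p n Y ->
      (Siso (sA X) (sB X) (sA Y) (sB Y) <-> ([set: Gof X] \isog [set: Gof Y])%g)).
Proof.
split; first exact: Gof_indec.
by move=> gT hT X Y _ _; split; [exact: Siso_isog | exact: isog_Siso].
Qed.
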